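(* Let $\mathbb{F}$ be a finite field of characteristic $2$, let $h,n$ be positive integers, and let $S=\{\alpha_1,\ldots,\alpha_n\}$ be a multi-set of $n$ elements of $\mathbb{F}$. Let $A(S,h)=[a_{ij}]$ be the $h\times n$ matrix with $a_{ij}=\alpha_j^{2^{i-1}}$, and let $\mathcal{C}(S,h)\subseteq\mathbb{F}^n$ be the linear code with parity check matrix $A(S,h)$, i.e. the set of all $(x_1,\ldots,x_n)\in\mathbb{F}^n$ with $\sum_{i=1}^n\alpha_i^{2^{j-1}}x_i=0$ for $j=1,\ldots,h$. Then $\mathcal{C}(S,h)$ has minimum distance $h+1$ if and only if $S$ is $h$-wise independent over $\mathbb{F}_2$.
   Context: A multi-set $S\subseteq\mathbb{F}$ is $t$-wise independent over a subfield $\mathbb{F}'\subseteq\mathbb{F}$ if every sub-multi-set $T\subseteq S$ with $|T|\le t$ is linearly independent over $\mathbb{F}'$ (in particular a multi-set containing a repeated element or $0$ within such a $T$ is dependent). *)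

From HB Require Import structures.
From mathcomp Require Import all_boot all_order all_algebra all_field.
Set Implicit Arguments. Unset Strict Implicit. Unset Printing Implicit Defensive.
Import GRing.Theory.
Local Open Scope ring_scope.

(* A multi-set S = {alpha_1, ..., alpha_n} of elements of F is represented by
   an indexing function alpha : 'I_n -> F (repetitions allowed). *)

(* Linear independence over the prime subfield F_2 = {0, 1} of F (char F = 2)
   of the sub-multi-set {alpha_i | i in I}: every F_2-linear combination
   (coefficients c i in {0,1}, embedded as (c i)%:R) equal to 0 is trivial. *)
Definition F2_lin_indep (F : fieldType) (n : nat) (alpha : 'I_n -> F)
  (I : {set 'I_n}) : Prop :=
  forall c : 'I_n -> bool,
    \sum_(i in I) (c i)%:R * alpha i = 0 -> forall i, i \in I -> c i = false.

Definition twise_indep_F2 (F : fieldType) (n : nat) (alpha : 'I_n -> F)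
  (t : nat) : Prop :=
  forall I : {set 'I_n}, (#|I| <= t)%N -> F2_lin_indep alpha I.

Definition code_Sh (F : fieldType) (n h : nat) (alpha : 'I_n -> F)
  (x : 'rV[F]_n) : Prop :=
  forall j : nat, (j < h)%N -> \sum_(i < n) alpha i ^+ (2 ^ j) * x 0 i = 0.

Definition hweight (F : fieldType) (n : nat) (x : 'rV[F]_n) : nat :=
  #|[set i | x 0 i != 0]|.

Definition has_min_dist (F : fieldType) (n : nat) (C : 'rV[F]_n -> Prop)
  (d : nat) : Prop :=
  (exists2 x, C x & x != 0 /\ hweight x = d) /\
  (forall x, C x -> x != 0 -> (d <= hweight x)%N).

From HB Require Import structures.
From mathcomp Require Import all_boot all_order all_algebra all_field.
Set Implicit Arguments. Unset Strict Implicit. Unset Printing Implicit Defensive.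
Import GRing.Theory.
Local Open Scope ring_scope.

(* A nonzero codeword of weight at most h is supported on a set T of t <= h
   columns, and the first t rows of A(S,h) restricted to T form the Moore matrix
   (a_i^(2^j)) of the a_i, i in T. In characteristic 2 that matrix is invertible
   when the a_i are F_2-independent: a left kernel vector y gives the linearized
   polynomial sum_j y_j X^(2^j), of degree at most 2^(t-1), which is additive and
   hence vanishes on all 2^t distinct points of the F_2-span of the a_i.
   Conversely, by additivity of Frobenius, the 0/1 vector of an F_2-relation is a
   codeword. Finally h+1 columns always carry a nonzero codeword, since only h
   equations constrain them. *)

Section ShortCodeword.

Variable F : fieldType.

Lemma tall_mx_nz_kernel m (A : 'M[F]_(m.+1, m)) :
  exists2 w : 'rV_m.+1, w != 0 & w *m A = 0.
Proof.
exists (nz_row (kermx A)); last exact/sub_kermxP/nz_row_sub.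
by rewrite nz_row_eq0 kermx_eq0 /row_free ltn_eqF // ltnS rank_leq_col.
Qed.

Lemma code_Sh_short_codeword n h (alpha : 'I_n -> F) : (h < n)%N ->
  exists2 x, code_Sh h alpha x & x != 0 /\ (hweight x <= h.+1)%N.
Proof.
move=> hn; pose s := widen_ord hn.
have [w w_nz wA0] :=
  tall_mx_nz_kernel (\matrix_(i < h.+1, j < h) alpha (s i) ^+ (2 ^ j)).
pose x : 'rV[F]_n := \row_k if (k < h.+1)%N then w 0 (inord k) else 0.
have xE i : x 0 (s i) = w 0 i by rewrite mxE /= ltn_ord inord_val.
exists x; [move=> j jh | split].
- move/rowP/(_ (Ordinal jh)): wA0; rewrite !mxE => wA0j; rewrite -[RHS]wA0j.
  rewrite (bigID (fun k : 'I_n => (k < h.+1)%N)) /= [X in _ + X]big1 ?addr0.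
    by rewrite big_ord_narrow; apply: eq_bigr => i _; rewrite xE mxE mulrC.
  by move=> k /negbTE kh; rewrite mxE kh mulr0.
- apply: contraNneq w_nz => x0; apply/eqP/rowP => i.
  by rewrite -xE x0 !mxE.
- rewrite -[h.+1]card_ord -cardsT (leq_trans _ (leq_imset_card s _)) //.
  apply/subset_leq_card/subsetP => k; rewrite inE mxE.
  case: ifP => [kh _ | _]; last by rewrite eqxx.
  by apply/imsetP; exists (inord k); rewrite ?inE //; apply: val_inj; rewrite /= inordK.
Qed.

End ShortCodeword.

Section CharTwo.

Variable F : fieldType.
Hypothesis charF2 : 2 \in [pchar F].

Lemma exprD_exp2n j (x y : F) : (x + y) ^+ (2 ^ j) = x ^+ (2 ^ j) + y ^+ (2 ^ j).
Proof. by apply: exprDn_pchar; rewrite pnatX pnatE // charF2. Qed.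

Lemma F2_comb_exp2n (I : finType) (c : I -> bool) (a : I -> F) j :
  (\sum_i (c i)%:R * a i) ^+ (2 ^ j) = \sum_i (c i)%:R * a i ^+ (2 ^ j).
Proof.
have zero_exp : (0 : F) ^+ (2 ^ j) = 0 by rewrite expr0n expn_eq0.
rewrite (big_morph _ (exprD_exp2n j) zero_exp).
by apply: eq_bigr => i _; case: (c i); rewrite ?mul1r ?mul0r ?expr0n ?expn_eq0.
Qed.

Lemma natr_neqb (b1 b2 : bool) : ((b1 != b2)%:R : F) = b1%:R + b2%:R.
Proof.
by case: b1; case: b2; rewrite /= ?addr0 ?add0r // -mulr2n (pcharf0 charF2).
Qed.

Lemma F2_comb_inj n (a : 'I_n -> F) : F2_lin_indep a [set: 'I_n] ->
  injective (fun c : {ffun 'I_n -> bool} => \sum_i (c i)%:R * a i).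
Proof.
move=> indep c1 c2 eq_comb; apply/ffunP => i; apply/eqP.
apply/negbFE/(indep (fun i => c1 i != c2 i)); last exact: in_setT.
rewrite (eq_bigl predT) => [|k]; last exact: in_setT.
under eq_bigr do rewrite natr_neqb mulrDl.
by rewrite big_split /= eq_comb -mulr2n -mulr_natr (pcharf0 charF2) mulr0.
Qed.

Definition linearized_poly t (y : 'rV[F]_t) : {poly F} :=
  \sum_(j < t) y 0 j *: 'X^(2 ^ j).

Lemma size_linearized_poly t (y : 'rV[F]_t) : (size (linearized_poly y) <= 2 ^ t)%N.
Proof.
apply: (big_ind (fun q : {poly F} => size q <= 2 ^ t)%N) => [|p q|j _].
- by rewrite size_poly0.
- by move=> sp sq; rewrite (leq_trans (size_polyD _ _)) // geq_max sp sq.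
- by rewrite (leq_trans (size_scale_leq _ _)) // size_polyXn ltn_exp2l.
Qed.

Lemma linearized_poly_eq0 t (y : 'rV[F]_t) : linearized_poly y = 0 -> y = 0.
Proof.
move=> y0; apply/rowP => k; rewrite mxE.
move/(congr1 (fun q : {poly F} => q`_(2 ^ k))): y0.
rewrite coef0 coef_sumMXn (bigD1 k) ?eqxx //= big1 ?addr0 // => j.
by rewrite eqn_exp2l // andbN.
Qed.

Lemma horner_linearized_poly t (y : 'rV[F]_t) x :
  (linearized_poly y).[x] = \sum_j y 0 j * x ^+ (2 ^ j).
Proof. by rewrite horner_sum; apply: eq_bigr => j _; rewrite hornerZ hornerXn. Qed.

Lemma horner_linearized_poly_F2_comb t (y : 'rV[F]_t) (I : finType)
    (c : I -> bool) (a : I -> F) :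
  (linearized_poly y).[\sum_i (c i)%:R * a i] =
    \sum_i (c i)%:R * (linearized_poly y).[a i].
Proof.
rewrite horner_linearized_poly.
under eq_bigr do rewrite F2_comb_exp2n mulr_sumr.
rewrite exchange_big; apply: eq_bigr => i _.
by rewrite horner_linearized_poly mulr_sumr; apply: eq_bigr => j _; rewrite mulrCA.
Qed.

Definition moore_mx t (b : 'I_t -> F) : 'M[F]_t := \matrix_(j, i) b i ^+ (2 ^ j).

Lemma mul_row_moore_mx t (y : 'rV[F]_t) (b : 'I_t -> F) i :
  (y *m moore_mx b) 0 i = (linearized_poly y).[b i].
Proof.
by rewrite horner_linearized_poly mxE; apply: eq_bigr => j _; rewrite mxE.
Qed.

Lemma moore_mx_unit t (b : 'I_t -> F) :
  F2_lin_indep b [set: 'I_t] -> moore_mx b \in unitmx.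
Proof.
move=> indep; rewrite unitmxE unitfE; apply/det0P => -[y y_nz yM0].
pose comb (c : {ffun 'I_t -> bool}) := \sum_i (c i)%:R * b i.
pose rs := [seq comb c | c <- enum {ffun 'I_t -> bool}].
suff /linearized_poly_eq0 y0 : linearized_poly y = 0 by rewrite y0 eqxx in y_nz.
apply: (@roots_geq_poly_eq0 _ _ rs).
- apply/allP => _ /mapP[c _ ->]; rewrite /root horner_linearized_poly_F2_comb.
  by rewrite big1 // => i _; rewrite -mul_row_moore_mx yM0 mxE mulr0.
- by rewrite map_inj_uniq ?enum_uniq //; apply: F2_comb_inj.
- by rewrite size_map -cardE card_ffun card_bool card_ord size_linearized_poly.
Qed.

Lemma F2_lin_indep_enum n (a : 'I_n -> F) (T : {set 'I_n}) :
  F2_lin_indep a T ->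
  F2_lin_indep (fun i : 'I_#|T| => a (enum_val i)) [set: 'I_#|T|].
Proof.
move=> indep c c0 i _.
pose c' k := [exists i', (enum_val i' == k) && c i'].
have c'E i' : c' (enum_val i') = c i'.
  apply/existsP/idP => [[i'' /andP[/eqP/enum_val_inj-> //]] | ci'].
  by exists i'; rewrite eqxx.
rewrite -c'E; apply: (indep c') (enum_valP i).
rewrite big_enum_val -[RHS]c0.
by apply: eq_big => [k | k _]; rewrite ?in_setT ?c'E.
Qed.

Lemma code_Sh_weight_gt n h (alpha : 'I_n -> F) x :
  twise_indep_F2 alpha h -> code_Sh h alpha x -> x != 0 -> (h < hweight x)%N.
Proof.
move=> indep cx; rewrite ltnNge; apply: contraNN; rewrite /hweight => supp_le.
set T := [set i | x 0 i != 0] in supp_le *.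
pose M := moore_mx (fun i : 'I_#|T| => alpha (enum_val i)).
pose v : 'cV_#|T| := \col_i x 0 (enum_val i).
have M_unit : M \in unitmx by apply/moore_mx_unit/F2_lin_indep_enum/indep.
have Mv0 : M *m v = 0.
  apply/colP => j; rewrite !mxE -[RHS](cx j (leq_trans (ltn_ord j) supp_le)).
  rewrite (bigID (mem T)) /= [X in _ = _ + X]big1 ?addr0 => [|k].
    by rewrite [RHS]big_enum_val; apply: eq_bigr => i _; rewrite !mxE.
  by rewrite inE negbK => /eqP->; rewrite mulr0.
have v0 : v = 0 by rewrite -(mulKmx M_unit v) Mv0 mulmx0.
apply/eqP/rowP => k; apply/eqP; rewrite mxE; apply: contraT => xk.
have kT : k \in T by rewrite inE.
move/colP/(_ (enum_rank_in kT k)): v0; rewrite !mxE enum_rankK_in // => /eqP.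
by rewrite (negbTE xk).
Qed.

Lemma code_Sh_F2_relation n h (alpha : 'I_n -> F) (c : 'I_n -> bool) :
  \sum_i (c i)%:R * alpha i = 0 -> code_Sh h alpha (\row_i (c i)%:R).
Proof.
move=> c0 j _; transitivity ((\sum_i (c i)%:R * alpha i) ^+ (2 ^ j)).
  by rewrite F2_comb_exp2n; apply: eq_bigr => i _; rewrite mxE mulrC.
by rewrite c0 expr0n expn_eq0.
Qed.

Lemma hweight_F2_row n (c : 'I_n -> bool) :
  hweight (\row_i (c i)%:R : 'rV[F]_n) = #|[set i | c i]|.
Proof.
by apply: eq_card => i; rewrite !inE mxE; case: (c i); rewrite ?oner_eq0 ?eqxx.
Qed.

Lemma twise_indep_F2_weight n h (alpha : 'I_n -> F) :
  twise_indep_F2 alpha h <->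
  forall x, code_Sh h alpha x -> x != 0 -> (h < hweight x)%N.
Proof.
split=> [indep x | wt I I_le c c0 i iI]; first exact: code_Sh_weight_gt.
pose c' k := (k \in I) && c k.
have c'0 : \sum_k (c' k)%:R * alpha k = 0.
  apply: etrans c0; rewrite [RHS]big_mkcond; apply: eq_bigr => k _.
  by rewrite /c'; case: (k \in I); rewrite ?mul0r.
have x0 : \row_k (c' k)%:R == 0 :> 'rV[F]_n.
  apply: contraTT I_le => /(wt _ (code_Sh_F2_relation (h := h) c'0)).
  rewrite hweight_F2_row -ltnNge => /leq_trans; apply.
  by apply/subset_leq_card/subsetP => k; rewrite inE /c' => /andP[].
move/eqP/rowP/(_ i): x0; rewrite !mxE /c' iI.
by case: (c i) => //= /eqP; rewrite oner_eq0.
Qed.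

End CharTwo.

Theorem lemma9 (F : finFieldType) (chF2 : (2 \in [pchar F])%N)
  (h n : nat) (h_gt0 : (0 < h)%N) (n_gt0 : (0 < n)%N) (hn : (h < n)%N)
  (alpha : 'I_n -> F) :
  has_min_dist (code_Sh h alpha) h.+1 <-> twise_indep_F2 alpha h.
Proof.
split=> [[_ wt] | /(twise_indep_F2_weight chF2) wt].
  exact/(twise_indep_F2_weight chF2).
have [x cx [x_nz wx]] := code_Sh_short_codeword alpha hn.
split; last exact: wt.
exists x => //; split=> //.
by apply/eqP; rewrite eqn_leq wx (wt x cx x_nz).
Qed.
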